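(* Let $G$ be a graph. For any two maximum matchings $F, F'$ of $G$ we have $\nu(G\setminus F')\le 2\,\nu(G\setminus F)$. Consequently $L(G)\le 2\,l(G)$.
   Context: Graphs are finite, undirected, without loops or multiple edges. $\nu(G)$ denotes the maximum size of a matching of $G$; a matching is maximum if it has $\nu(G)$ edges. For $F\subseteq E(G)$, $G\setminus F$ is the graph with vertex set $V(G)$ and edge set $E(G)\setminus F$. Define $L(G)=\max\{\nu(G\setminus F): F \text{ a maximum matching of } G\}$ and $l(G)=\min\{\nu(G\setminus F): F \text{ a maximum matching of } G\}$. *)

(* A finite simple graph on the vertex type T is given by its
   edge set E : {set {set T}}, every edge being a 2-element subset of T. *)
From mathcomp Require Import all_boot.
Set Implicit Arguments. Unset Strict Implicit. Unset Printing Implicit Defensive.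

Section Matching.
Variable T : finType.

Definition simple_graph (E : {set {set T}}) : bool :=
  [forall A in E, #|A| == 2].

Definition is_matching (E M : {set {set T}}) : bool :=
  (M \subset E) &&
  [forall A in M, forall B in M, (A != B) ==> [disjoint A & B]].

Definition nu (E : {set {set T}}) : nat :=
  \max_(M : {set {set T}} | is_matching E M) #|M|.

Definition max_matching (E M : {set {set T}}) : bool :=
  is_matching E M && (#|M| == nu E).

(* G \ F has the same vertices and edge set E :\: F. *)
Definition Lmax (E : {set {set T}}) : nat :=
  \max_(F : {set {set T}} | max_matching E F) nu (E :\: F).

(* l(G) = min { nu(G \ F) : F maximum matching of G }.  The set of maximum
   matchings is nonempty, and all values are <= #|E|, so #|E| is a neutral
   starting value for the iterated minimum. *)
Definition lmin (E : {set {set T}}) : nat :=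
  \big[minn/#|E|]_(F : {set {set T}} | max_matching E F) nu (E :\: F).
End Matching.

From mathcomp Require Import all_boot.

(* Let F, F' be maximum matchings of a graph with edge set E and let M be a
   maximum matching of E \ F'.  Split M into M \ F and M /\ F:
   - M \ F is a matching avoiding F, so #|M \ F| <= nu (E \ F);
   - M /\ F avoids F', hence lies in F \ F'.  As #|F| = #|F'|, the sets
     F \ F' and F' \ F have the same size, and F' \ F is a matching
     avoiding F; so #|M /\ F| <= #|F' \ F| <= nu (E \ F).
   Adding up, nu (E \ F') = #|M| <= 2 nu (E \ F).  Taking F' with
   nu (E \ F') = L(G) and F with nu (E \ F) = l(G) gives L(G) <= 2 l(G).  The argument never uses that edges have two ends,
   so it is stated for arbitrary set systems E. *)

Set Implicit Arguments.
Unset Strict Implicit.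
Unset Printing Implicit Defensive.

Section Matchings.
Variable T : finType.
Implicit Types E M N F : {set {set T}}.

Lemma matching_sub E E' M N :
  is_matching E M -> N \subset M -> N \subset E' -> is_matching E' N.
Proof.
case/andP=> _ /forallP disjM sNM sNE'; rewrite /is_matching sNE' /=.
apply/forallP=> A; apply/implyP=> AN; apply/forallP=> B; apply/implyP=> BN.
have := disjM A; rewrite (subsetP sNM _ AN) => /forallP/(_ B).
by rewrite (subsetP sNM _ BN).
Qed.

Lemma matching_le_nu E M : is_matching E M -> #|M| <= nu E.
Proof. by move=> matchM; rewrite /nu (leq_bigmax_cond _ matchM). Qed.

Lemma nu_attained E : exists2 M, is_matching E M & nu E = #|M|.
Proof.
have match0 : is_matching E set0.
  by rewrite /is_matching sub0set; apply/forallP=> A; rewrite in_set0.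
have nonempty : 0 < #|[pred M | is_matching E M]| by apply/card_gt0P; exists set0.
have [M matchM eq_nu] := eq_bigmax_cond (fun M => #|M|) nonempty.
by exists M; rewrite // /nu -eq_nu.
Qed.

Lemma nu_le_card E : nu E <= #|E|.
Proof. by have [M /andP[sME _] ->] := nu_attained E; exact: subset_leq_card. Qed.

Lemma cardsD_sym (A B : {set {set T}}) :
  #|A| = #|B| -> #|A :\: B| = #|B :\: A|.
Proof. by move=> eqAB; rewrite !cardsD eqAB setIC. Qed.

Lemma nu_remove_max_matching E F F' :
  max_matching E F -> max_matching E F' ->
  nu (E :\: F') <= 2 * nu (E :\: F).
Proof.
case/andP=> matchF /eqP cardF; case/andP=> matchF' /eqP cardF'.
have [M matchM ->] := nu_attained (E :\: F').
have sME : M \subset E :\: F' by case/andP: matchM.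
have outF : #|M :\: F| <= nu (E :\: F).
  apply/matching_le_nu/(matching_sub matchM (subsetDl _ _)).
  exact/setSD/(subset_trans sME (subsetDl _ _)).
have inF : #|M :&: F| <= #|F :\: F'|.
  apply/subset_leq_card/subsetP=> A; rewrite !inE => /andP[AM ->]; rewrite andbT.
  by have := subsetP sME A AM; rewrite !inE => /andP[].
have F'outF : #|F' :\: F| <= nu (E :\: F).
  apply/matching_le_nu/(matching_sub matchF' (subsetDl _ _)).
  by apply: setSD; case/andP: matchF'.
rewrite -(cardsID F M) mul2n -addnn leq_add //.
by rewrite (leq_trans inF) // cardsD_sym ?cardF ?cardF'.
Qed.

Lemma le_double_lmin E x :
  x <= 2 * #|E| ->
  (forall F, max_matching E F -> x <= 2 * nu (E :\: F)) ->
  x <= 2 * lmin E.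
Proof.
move=> le_xE le_xF; rewrite /lmin; elim/big_ind: _ => // a b le_xa le_xb.
by rewrite /minn; case: ifP.
Qed.

End Matchings.

Theorem theorem2 (T : finType) (E : {set {set T}}) :
  simple_graph E ->
  (forall F F' : {set {set T}}, max_matching E F -> max_matching E F' ->
     nu (E :\: F') <= 2 * nu (E :\: F)) /\
  Lmax E <= 2 * lmin E.
Proof.
move=> _; split; first exact: nu_remove_max_matching.
apply/bigmax_leqP=> F' maxF'; apply: le_double_lmin.
- rewrite (leq_trans (nu_le_card _)) // mul2n -addnn (leq_trans _ (leq_addr _ _)) //.
  exact/subset_leq_card/subsetDl.
- by move=> F maxF; apply: nu_remove_max_matching.
Qed.
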